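(* Let $\mathbf a\in\mathbb N^{L+1}$ be an architecture with width $W$ and depth $L$, and $R>0$ a parameter bound such that \[\inf_{f\in\mathcal{NN}(\mathbf a,W,L,R)}\|f-\eta\|_{L^\infty(\rho_X)}\le\varepsilon\] for some $\varepsilon\ge0$. Then for any $\lambda\ge0$, any minimizer $\boldsymbol\theta_\lambda$ of the regularized population risk $\mathcal R_{\ell,\lambda}$ over $\mathcal P_{\mathbf a,R}$ satisfies \[\|f(\cdot;\boldsymbol\theta_\lambda)-\eta\|_{L^2(\rho_X)}\le\varepsilon+\sqrt{\tfrac\lambda2P(\mathbf a)R^p}.\]
   Context: Setting: $\mathcal X=[0,1]^d$, $\rho$ a probability distribution on $\mathcal X\times\{-1,1\}$ with $X$-marginal $\rho_X$, $(X,Y)\sim\rho$, $\eta(x)=\mathbb E[Y\mid X=x]$. Networks: $\sigma(t)=\max\{0,t\}$; architecture $\mathbf a=(a_0,\dots,a_L)$, $a_0=d$, $a_L=1$, width $W=\max_la_l$, $P(\mathbf a)=\sum_{l=1}^L(a_la_{l-1}+a_l)$; parametrization $\boldsymbol\theta=((W_l,B_l))_{l=1}^L$, $W_l\in\mathbb R^{a_l\times a_{l-1}}$, $B_l\in\mathbb R^{a_l}$; $|\boldsymbol\theta|_p^p$ is the sum of $p$-th powers of absolute entries; $\mathcal P_{\mathbf a,R}$ is the set of parametrizations with entries in $[-R,R]$. Realization $f(x;\boldsymbol\theta)=\operatorname{clip}_1(T_L\circ\sigma\circ\cdots\circ\sigma\circ T_1(x))$, $T_l(z)=W_lz+B_l$,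 $\operatorname{clip}_1(t)=\max(-1,\min(1,t))$; $\mathcal{NN}(\mathbf a,W,L,R)=\{f(\cdot;\boldsymbol\theta)|_{\mathcal X}:\boldsymbol\theta\in\mathcal P_{\mathbf a,R}\}$. Fix $0<p<\infty$; $\mathcal R_{\ell,\lambda}(\boldsymbol\theta)=\mathbb E[(f(X;\boldsymbol\theta)-Y)^2]+\frac\lambda2|\boldsymbol\theta|_p^p$. *)

From HB Require Import structures.
From mathcomp Require Import all_boot all_order all_algebra.
From mathcomp Require Import all_classical all_reals all_analysis.
Unset Printing Implicit Defensive.
Import Order.TTheory GRing.Theory Num.Theory.
Import numFieldNormedType.Exports.
Local Open Scope classical_set_scope.
Local Open Scope ring_scope.

(** An architecture is given by the widths [a 0 = d, a 1, ..., a L = 1].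
    A parametrization gives, for each layer index [l] (0-based: the paper's
    layer [l+1]), a weight matrix [W_(l+1) : 'M_(a (l+1), a l)] and a bias
    [B_(l+1) : 'cV_(a (l+1))].  Only layers [l < L] are used. *)
Record param (R : realType) (a : nat -> nat) := Param {
  pW : forall l : nat, 'M[R]_(a l.+1, a l);
  pB : forall l : nat, 'cV[R]_(a l.+1) }.
Arguments pW {R a}.
Arguments pB {R a}.

Section nn.
Context {R : realType}.

Definition relu (t : R) : R := Num.max 0 t.

Definition clip1 (t : R) : R := Num.max (-1) (Num.min 1 t).

Fixpoint pre (a : nat -> nat) (th : param R a) (x : seq R) (l : nat)
  : 'cV[R]_(a l) :=
  match l return 'cV[R]_(a l) with
  | 0 => \col_(i < a 0) nth 0 x i
  | l'.+1 =>
      let z := pre a th x l' in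
      let z' := if l' is 0 then z else map_mx relu z in
      pW th l' *m z' + pB th l'
  end.

(** Realization f(x; theta) = clip_1(T_L o sigma o ... o sigma o T_1 (x)).
    Since a L = 1, the sum below is the single output coordinate. *)
Definition realize (a : nat -> nat) (L : nat) (th : param R a) (x : seq R) : R :=
  clip1 (\sum_(i < a L) pre a th x L i 0).

Definition paramset (a : nat -> nat) (L : nat) (Rb : R) : set (param R a) :=
  [set th | forall l, (l < L)%N ->
     (forall i j, `|pW th l i j| <= Rb) /\ (forall i, `|pB th l i 0| <= Rb)].

Definition pnorm_p (a : nat -> nat) (L : nat) (p : R) (th : param R a) : R :=
  \sum_(l < L) ((\sum_(i < a l.+1) \sum_(j < a l) `|pW th l i j| `^ p)
                 + \sum_(i < a l.+1) `|pB th l i 0| `^ p).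

Definition nparams (a : nat -> nat) (L : nat) : nat :=
  \sum_(l < L) (a l.+1 * a l + a l.+1)%N.

Definition NN (d : nat) (a : nat -> nat) (L : nat) (Rb : R)
  : set (d.-tuple R -> R) :=
  [set f | exists2 th, paramset a L Rb th & f = (fun x : d.-tuple R => realize a L th x)].

Definition reg_risk (d : nat) (rho : probability (d.-tuple R * R)%type R)
  (a : nat -> nat) (L : nat) (p lambda : R) (th : param R a) : \bar R :=
  (\int[rho]_z ((realize a L th z.1 - z.2) ^+ 2)%:E
   + (lambda / 2 * pnorm_p a L p th)%:E)%E.

Definition supported_on_cube_pm1 (d : nat)
  (rho : probability (d.-tuple R * R)%type R) : Prop :=
  {ae rho, forall z : d.-tuple R * R,
     (forall i : 'I_d, 0 <= tnth z.1 i <= 1) /\ (z.2 = 1 \/ z.2 = -1)}.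

Definition marginalX (d : nat) (rho : probability (d.-tuple R * R)%type R)
  : {measure set (d.-tuple R) -> \bar R}.
refine (pushforward rho fst : {measure set _ -> \bar R}).
exact: measurable_fst.
Defined.

(** eta is (a version of) the regression function E[Y | X = x]:
    measurable, rho_X-integrable, and int_{X in B} Y drho = int_B eta drho_X
    for every measurable B. *)
Definition regression_fun (d : nat) (rho : probability (d.-tuple R * R)%type R)
  (eta : d.-tuple R -> R) : Prop :=
  measurable_fun setT eta /\
  (marginalX d rho).-integrable setT (fun x => (eta x)%:E) /\
  forall B : set (d.-tuple R), measurable B ->
    (\int[rho]_(z in B `*` setT) (z.2)%:E
     = \int[marginalX d rho]_(x in B) (eta x)%:E)%E.

End nn.

From HB Require Import structures.
From mathcomp Require Import all_boot all_order all_algebra.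
From mathcomp Require Import all_classical all_reals all_analysis.
From mathcomp Require Import measurable_realfun ess_sup_inf ring lra.
Import Order.TTheory GRing.Theory Num.Theory.
Import numFieldNormedType.Exports.
Import HBNNSimple.
Local Open Scope classical_set_scope.
Local Open Scope ring_scope.

(* The regression function satisfies E[h(X) Y] = E[h(X) eta(X)] for every bounded
   measurable h: for indicators of measurable sets this is its definition, and it
   extends to bounded h by simple-function approximation.  Taking h = f - g for two
   bounded networks gives
     E(f(X) - Y)^2 - E(g(X) - Y)^2 = |f - eta|_2^2 - |g - eta|_2^2,
   so comparing the regularized risk of theta_lambda with that of a parameter theta
   whose network is within e > eps of eta in L^oo(rho_X) yields
     |f_lambda - eta|_2^2 <= e^2 + lambda/2 |theta|_p^p <= e^2 + lambda/2 P(a) R^p.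
   Letting e decrease to eps and using sqrt(s + t) <= sqrt s + sqrt t concludes. *)

Section network.
Context {R : realType} (d : nat) (a : nat -> nat).
Implicit Types (th : param R a) (L : nat).

Lemma measurable_pre th l (i : 'I_(a l)) :
  measurable_fun [set: d.-tuple R] (fun x : d.-tuple R => pre a th x l i 0).
Proof.
elim: l i => [|l IH] i /=.
  under eq_fun do rewrite mxE.
  have [lt_id|le_di] := ltnP i d.
    rewrite (_ : (fun _ => _) = fun x : d.-tuple R => tnth x (Ordinal lt_id)).
      exact: measurable_tnth.
    by apply/funext => x; rewrite (tnth_nth 0).
  rewrite (_ : (fun _ => _) = cst 0); first exact: measurable_cst.
  by apply/funext => x; rewrite nth_default // size_tuple.
under eq_fun do rewrite !mxE.
apply: measurable_funD; last exact: measurable_cst.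
apply: measurable_sum => j; apply: measurable_funM; first exact: measurable_cst.
case: l i IH j => [|l] i IH j //=.
under eq_fun do rewrite mxE.
exact: measurable_maxr (measurable_cst _) (IH j).
Qed.

Lemma measurable_realize L th :
  measurable_fun [set: d.-tuple R] (fun x : d.-tuple R => realize a L th x).
Proof.
apply: measurable_maxr; first exact: measurable_cst.
apply: measurable_minr; first exact: measurable_cst.
by apply: measurable_sum => i; exact: measurable_pre.
Qed.

End network.

Lemma clip1_bounded {R : realType} (t : R) : `|clip1 t| <= 1.
Proof.
rewrite /clip1 ler_norml le_max lexx /= ge_max ge_min lexx /= andbT.
lra.
Qed.

Lemma realize_bounded {R : realType} a L (th : param R a) (x : seq R) :
  `|realize a L th x| <= 1.
Proof. exact: clip1_bounded. Qed.

Section parameter_norm.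
Context {R : realType} (a : nat -> nat) (L : nat) (p : R).
Implicit Types th : param R a.

Lemma pnorm_p_ge0 th : 0 <= pnorm_p a L p th.
Proof.
by apply: sumr_ge0 => l _; apply: addr_ge0; do ?[apply: sumr_ge0 => ? _];
  exact: powR_ge0.
Qed.

Lemma pnorm_p_le (Rb : R) th : 0 <= p -> th \in paramset a L Rb ->
  pnorm_p a L p th <= (nparams a L)%:R * Rb `^ p.
Proof.
move=> p0; rewrite inE => thR.
have powR_le t : `|t| <= Rb -> `|t| `^ p <= Rb `^ p.
  by move=> tR; rewrite ge0_ler_powR ?nnegrE // (le_trans (normr_ge0 t) tR).
rewrite /pnorm_p /nparams natr_sum mulr_suml; apply: ler_sum => l _.
have [thW thB] := thR l (ltn_ord l).
rewrite natrD natrM mulrDl; apply: lerD.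
  apply: (@le_trans _ _ (\sum_(i < a l.+1) \sum_(j < a l) Rb `^ p)).
    by do 2![apply: ler_sum => ? _]; exact: powR_le.
  under eq_bigr do rewrite sumr_const card_ord.
  by rewrite sumr_const card_ord -mulrnA -natrM mulr_natl mulnC.
apply: (@le_trans _ _ (\sum_(i < a l.+1) Rb `^ p)).
  by apply: ler_sum => ? _; exact: powR_le.
by rewrite sumr_const card_ord mulr_natl.
Qed.

End parameter_norm.

Section ae_bounded.
Context {d} {T : measurableType d} {R : realType}.
Variable mu : {finite_measure set T -> \bar R}.
Implicit Types k : T -> R.

Definition ae_bounded k :=
  measurable_fun [set: T] k /\ exists c, {ae mu, forall x, `|k x| <= c}.

Lemma ae_boundedW k c : measurable_fun [set: T] k -> (forall x, `|k x| <= c) ->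
  ae_bounded k.
Proof. by move=> mk kc; split => //; exists c; exact: aeW. Qed.

Lemma ae_bounded_cst r : ae_bounded (fun=> r).
Proof. exact: (@ae_boundedW _ `|r|) (measurable_cst r) (fun=> lexx _). Qed.

Lemma ae_boundedD k1 k2 :
  ae_bounded k1 -> ae_bounded k2 -> ae_bounded (fun x => k1 x + k2 x).
Proof.
move=> [mk1 [c1 k1c]] [mk2 [c2 k2c]]; split; first exact: measurable_funD.
exists (c1 + c2); apply: filterS2 k1c k2c => x k1x k2x.
exact: le_trans (ler_normD _ _) (lerD k1x k2x).
Qed.

Lemma ae_boundedN k : ae_bounded k -> ae_bounded (fun x => - k x).
Proof.
move=> [mk [c kc]]; split; first exact: measurableT_comp.
by exists c; apply: filterS kc => x; rewrite normrN.
Qed.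

Lemma ae_boundedB k1 k2 :
  ae_bounded k1 -> ae_bounded k2 -> ae_bounded (fun x => k1 x - k2 x).
Proof. by move=> k1b /ae_boundedN; exact: ae_boundedD. Qed.

Lemma ae_boundedM k1 k2 :
  ae_bounded k1 -> ae_bounded k2 -> ae_bounded (fun x => k1 x * k2 x).
Proof.
move=> [mk1 [c1 k1c]] [mk2 [c2 k2c]]; split; first exact: measurable_funM.
exists (c1 * c2); apply: filterS2 k1c k2c => x k1x k2x.
by rewrite normrM ler_pM.
Qed.

Lemma ae_boundedX k n : ae_bounded k -> ae_bounded (fun x => k x ^+ n).
Proof.
move=> kb; elim: n => [|n IH]; first exact: ae_bounded_cst.
by under eq_fun do rewrite exprS; exact: ae_boundedM.
Qed.

Lemma ae_bounded_integrable k : ae_bounded k -> mu.-integrable [set: T] (EFin \o k).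
Proof.
move=> [mk [c kc]]; apply/integrableP; split; first exact/measurable_EFinP.
apply: (@le_lt_trans _ _ (`|c|%:E * mu [set: T])%E).
  apply: integral_le_bound => //; first exact/measurable_EFinP.
  by apply: filterS kc => x /= kx _; rewrite lee_fin (le_trans kx (ler_norm c)).
by rewrite ltey_eq fin_numM ?fin_num_measure.
Qed.

End ae_bounded.

Ltac solve_ae_bounded := repeat first
  [ assumption | exact: ae_bounded_cst | apply: ae_boundedB | apply: ae_boundedD
  | apply: ae_boundedN | apply: ae_boundedX | apply: ae_boundedM ].

Lemma ae_pushforward {d1 d2} {T : measurableType d1} {Y : measurableType d2}
    {R : realType} (mu : {measure set T -> \bar R}) (phi : T -> Y)
    (mphi : measurable_fun [set: T] phi) (P : Y -> Prop) :
  {ae pushforward mu phi, forall y, P y} -> {ae mu, forall x, P (phi x)}.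
Proof.
move=> [N [mN N0 PN]]; exists (phi @^-1` N); split => //.
- by rewrite -[_ @^-1` _]setTI; exact: mphi.
- by move=> x /= nPx; exact: PN.
Qed.

Lemma integral_eq_of_subr {d} {T : measurableType d} {R : realType}
    {mu : {measure set T -> \bar R}} {D : set T} {u v u' v' : T -> R} :
  measurable D ->
  mu.-integrable D (EFin \o u) -> mu.-integrable D (EFin \o v) ->
  mu.-integrable D (EFin \o u') -> mu.-integrable D (EFin \o v') ->
  (forall x, D x -> u x - v x = u' x - v' x) ->
  (\int[mu]_(x in D) (u x)%:E = \int[mu]_(x in D) (v x)%:E)%E ->
  (\int[mu]_(x in D) (u' x)%:E = \int[mu]_(x in D) (v' x)%:E)%E.
Proof.
move=> mD iu iv iu' iv' uv' euv.
have : Rintegral mu D u' - Rintegral mu D v' = Rintegral mu D u - Rintegral mu D v.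
  by rewrite -!RintegralB //; apply: eq_Rintegral => x /[!inE] /uv'.
rewrite {2 3}/Rintegral euv subrr => /eqP; rewrite subr_eq0 => /eqP e.
by rewrite -(fineK (integrable_fin_num mD iu')) -/(Rintegral _ _ _) e
  /Rintegral fineK // integrable_fin_num.
Qed.

Section preimage_integral.
Context {d1 d2} {S : measurableType d1} {X : measurableType d2} {R : realType}.
Context {mu : {measure set S -> \bar R}} {phi : S -> X}.
Hypothesis mphi : measurable_fun [set: S] phi.
Local Open Scope ereal_scope.

Lemma integral_nnsfun_comp_mul (f : {nnsfun X >-> R}) (g : S -> R) :
  (forall s, 0 <= g s)%R -> measurable_fun [set: S] g ->
  \int[mu]_s (f (phi s) * g s)%:E =
  \sum_(y \in range f) y%:E * \int[mu]_(s in phi @^-1` (f @^-1` [set y])) (g s)%:E.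
Proof.
move=> g0 mg.
have mfy y : measurable (phi @^-1` (f @^-1` [set y])).
  by rewrite -[_ @^-1` _]setTI; apply: mphi => //; exact: measurable_funPTI.
have mind y : measurable_fun [set: S] (fun s => (\1_(f @^-1` [set y]) (phi s))%:E).
  apply/measurable_EFinP; apply: measurableT_comp mphi.
  by apply: measurable_indic; exact: measurable_funPTI.
transitivity (\int[mu]_s \sum_(y \in range f)
    (y%:E * ((\1_(f @^-1` [set y]) (phi s))%:E * (g s)%:E))).
  apply: eq_integral => s _; rewrite EFinM [in LHS]fimfunE -fsumEFin //.
  rewrite ge0_mule_fsuml => [|y]; last by rewrite nnfun_muleindic_ge0.
  by apply: eq_fsbigr => y _; rewrite EFinM muleA.
rewrite ge0_integral_fsum //; last 2 first.
- move=> y; apply: emeasurable_funM; first exact: measurable_cst.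
  by apply: emeasurable_funM => //; exact/measurable_EFinP.
- move=> y s _; rewrite muleA -!EFinM lee_fin.
  by rewrite mulr_ge0 // -lee_fin nnfun_muleindic_ge0.
apply: eq_fsbigr => y /[!inE] -[x _ <-].
rewrite ge0_integralZl //; last 3 first.
- by apply: emeasurable_funM => //; exact/measurable_EFinP.
- by move=> s _; rewrite -EFinM lee_fin mulr_ge0.
- by rewrite lee_fin.
congr (_ * _); rewrite [RHS]integral_mkcond; apply: eq_integral => s _.
rewrite patchE indicE /= (_ : (s \in _) = (phi s \in f @^-1` [set f x])) //.
by case: ifPn => _; rewrite ?mul1e ?mul0e.
Qed.

(* Approximating [h] from below by simple functions reduces both sides to finite
   sums of preimage integrals. *)
Lemma ge0_integral_comp_mul_eq (h : X -> R) {g1 g2 : S -> R} :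
  measurable_fun [set: X] h -> (forall x, 0 <= h x)%R ->
  (forall s, 0 <= g1 s)%R -> (forall s, 0 <= g2 s)%R ->
  measurable_fun [set: S] g1 -> measurable_fun [set: S] g2 ->
  (forall B, measurable B ->
    \int[mu]_(s in phi @^-1` B) (g1 s)%:E = \int[mu]_(s in phi @^-1` B) (g2 s)%:E) ->
  \int[mu]_s (h (phi s) * g1 s)%:E = \int[mu]_s (h (phi s) * g2 s)%:E.
Proof.
move=> mh h0 g10 g20 mg1 mg2 g12.
have mEh : measurable_fun [set: X] (EFin \o h) by exact/measurable_EFinP.
pose hn := nnsfun_approx measurableT mEh.
have approx (g : S -> R) : (forall s, 0 <= g s)%R -> measurable_fun [set: S] g ->
    \int[mu]_s (h (phi s) * g s)%:E =
    limn (fun n => \int[mu]_s (hn n (phi s) * g s)%:E).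
  move=> g0 mg; under eq_integral do rewrite EFinM.
  have -> : (fun n => \int[mu]_s (hn n (phi s) * g s)%:E) =
      (fun n => \int[mu]_s ((hn n (phi s))%:E * (g s)%:E)).
    by apply/funext => n; apply: eq_integral => s _; rewrite EFinM.
  rewrite -monotone_convergence //.
  - apply: eq_integral => s _; apply/esym/cvg_lim => //; apply: cvgeZr => //.
    apply: (@cvg_nnsfun_approx _ _ _ _ measurableT _ mEh) => //.
    by move=> x _; rewrite lee_fin.
  - move=> n; apply: emeasurable_funM; last exact/measurable_EFinP.
    by apply/measurable_EFinP; apply: measurableT_comp mphi; exact: measurable_funPT.
  - by move=> n s _; rewrite mule_ge0 ?lee_fin.
  - move=> s _ m n mn; rewrite lee_wpmul2r ?lee_fin //.
    exact/lefP/nd_nnsfun_approx.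
rewrite !approx //; congr (limn _); apply/funext => n.
rewrite !integral_nnsfun_comp_mul //; apply: eq_fsbigr => y _.
by rewrite g12 //; exact: measurable_funPTI.
Qed.

Lemma integrable_comp_mulr (h : X -> R) (c : R) (k : S -> R) :
  measurable_fun [set: X] h -> (forall x, `|h x| <= c)%R ->
  mu.-integrable [set: S] (EFin \o k) ->
  mu.-integrable [set: S] (fun s => (h (phi s) * k s)%:E).
Proof.
move=> mh hc ik.
rewrite (_ : (fun s => _) = (EFin \o (h \o phi)) \* (EFin \o k)); last first.
  by apply/funext => s; rewrite /= EFinM.
apply: integrableMr => //; first exact: measurableT_comp.
by exists c; split => [|M cM s _]; [exact: num_real | exact: le_trans (hc _) (ltW cM)].
Qed.

(* [k1^+ + k2^-] and [k1^- + k2^+] are nonnegative densities with the same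
   difference as [k1] and [k2], hence still with equal preimage integrals. *)
Lemma integral_comp_ge0_mul_eq (h : X -> R) (c : R) {k1 k2 : S -> R} :
  measurable_fun [set: X] h -> (forall x, 0 <= h x)%R -> (forall x, `|h x| <= c)%R ->
  mu.-integrable [set: S] (EFin \o k1) -> mu.-integrable [set: S] (EFin \o k2) ->
  (forall B, measurable B ->
    \int[mu]_(s in phi @^-1` B) (k1 s)%:E = \int[mu]_(s in phi @^-1` B) (k2 s)%:E) ->
  \int[mu]_s (h (phi s) * k1 s)%:E = \int[mu]_s (h (phi s) * k2 s)%:E.
Proof.
move=> mh h0 hc ik1 ik2 k12.
pose g1 := (k1^\+ \+ k2^\-)%R; pose g2 := (k1^\- \+ k2^\+)%R.
have g12E s : (k1 s - k2 s = g1 s - g2 s)%R.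
  have kE (k : S -> R) : k s = (k^\+ s - k^\- s)%R by rewrite -[in LHS](funrposBneg k).
  by rewrite {1}(kE k1) {1}(kE k2) /g1 /g2 /=; lra.
have mk i : mu.-integrable [set: S] (EFin \o i) -> measurable_fun [set: S] i.
  by move=> /measurable_int /measurable_EFinP.
have iD (i j : S -> R) : mu.-integrable [set: S] (EFin \o i) ->
    mu.-integrable [set: S] (EFin \o j) -> mu.-integrable [set: S] (EFin \o (i \+ j)%R).
  by move=> ii ij; apply: eq_integrable (integrableD measurableT ii ij).
have ig1 : mu.-integrable [set: S] (EFin \o g1).
  by apply: iD; [exact: integrable_funrpos|exact: integrable_funrneg].
have ig2 : mu.-integrable [set: S] (EFin \o g2).
  by apply: iD; [exact: integrable_funrneg|exact: integrable_funrpos].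
have g12 B : measurable B ->
    \int[mu]_(s in phi @^-1` B) (g1 s)%:E = \int[mu]_(s in phi @^-1` B) (g2 s)%:E.
  move=> mB; have mpB : measurable (phi @^-1` B).
    by rewrite -[_ @^-1` _]setTI; exact: mphi.
  apply: (integral_eq_of_subr mpB _ _ _ _ (fun s _ => g12E s)) (k12 B mB);
    exact: integrableS measurableT mpB (@subsetT _ _) _.
have g1_ge0 s : (0 <= g1 s)%R by rewrite addr_ge0 ?funrpos_ge0 ?funrneg_ge0.
have g2_ge0 s : (0 <= g2 s)%R by rewrite addr_ge0 ?funrpos_ge0 ?funrneg_ge0.
have mg1 : measurable_fun [set: S] g1.
  by apply: measurable_funD; [apply: measurable_funrpos|apply: measurable_funrneg]; exact: mk.
have mg2 : measurable_fun [set: S] g2.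
  by apply: measurable_funD; [apply: measurable_funrneg|apply: measurable_funrpos]; exact: mk.
have := ge0_integral_comp_mul_eq h mh h0 g1_ge0 g2_ge0 mg1 mg2 g12.
apply: integral_eq_of_subr => //; do ?exact: integrable_comp_mulr mh hc _.
by move=> s _; rewrite -!mulrBr g12E.
Qed.

Lemma integral_comp_mul_eq (h : X -> R) (c : R) {k1 k2 : S -> R} :
  measurable_fun [set: X] h -> (forall x, `|h x| <= c)%R ->
  mu.-integrable [set: S] (EFin \o k1) -> mu.-integrable [set: S] (EFin \o k2) ->
  (forall B, measurable B ->
    \int[mu]_(s in phi @^-1` B) (k1 s)%:E = \int[mu]_(s in phi @^-1` B) (k2 s)%:E) ->
  \int[mu]_s (h (phi s) * k1 s)%:E = \int[mu]_s (h (phi s) * k2 s)%:E.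
Proof.
move=> mh hc ik1 ik2 k12.
have [hposc hnegc] : ((forall x, `|h^\+ x| <= c) /\ (forall x, `|h^\- x| <= c))%R.
  split=> x; have /andP[hlo hhi] : (- c <= h x <= c)%R by rewrite -ler_norml.
    by rewrite ger0_norm ?funrpos_ge0 // ge_max; apply/andP; split; lra.
  by rewrite ger0_norm ?funrneg_ge0 // ge_max; apply/andP; split; lra.
have hsplit k : mu.-integrable [set: S] (EFin \o k) ->
    \int[mu]_s (h (phi s) * k s)%:E =
    \int[mu]_s ((h^\+)%R (phi s) * k s)%:E - \int[mu]_s ((h^\-)%R (phi s) * k s)%:E.
  move=> ik; rewrite -integralB_EFin //; last 2 first.
  - exact: integrable_comp_mulr (measurable_funrpos mh) hposc ik.
  - exact: integrable_comp_mulr (measurable_funrneg mh) hnegc ik.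
  by apply: eq_integral => s _; rewrite -EFinB -mulrBl -[in LHS](funrposBneg h).
rewrite !hsplit //.
by rewrite (integral_comp_ge0_mul_eq _ c (measurable_funrpos mh) _ hposc ik1 ik2 k12)
  ?(integral_comp_ge0_mul_eq _ c (measurable_funrneg mh) _ hnegc ik1 ik2 k12)
  // => x; rewrite ?funrpos_ge0 ?funrneg_ge0.
Qed.

Lemma integrable_comp_of_pushforward (f : X -> \bar R) :
  measurable_fun [set: X] f -> (pushforward mu phi).-integrable [set: X] f ->
  mu.-integrable [set: S] (f \o phi).
Proof.
move=> mf /integrableP[_]; rewrite ge0_integral_pushforward //; last first.
  exact: measurableT_comp.
by move=> fint; apply/integrableP; split => //; exact: measurableT_comp.
Qed.

End preimage_integral.

Lemma ae_le_Lnorm_infty {d} {T : measurableType d} {R : realType}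
    (mu : {measure set T -> \bar R}) (f : T -> R) (e : R) :
  (Lnorm mu +oo (EFin \o f) <= e%:E)%E -> {ae mu, forall x, `|f x| <= e}.
Proof.
rewrite unlock; case: ifPn => [_ /ess_supP|mu0 _].
  by apply: filterS => x /=; rewrite lee_fin.
exists [set: T]; split => //.
by apply/eqP; rewrite eq_le measure_ge0 andbT leNgt.
Qed.

Lemma Rintegral_sqr_le {d} {T : measurableType d} {R : realType}
    {P : probability T R} {k : T -> R} {e : R} :
  measurable_fun [set: T] k -> {ae P, forall x, `|k x| <= e} ->
  Rintegral P [set: T] (fun x => k x ^+ 2) <= e ^+ 2.
Proof.
move=> mk ke.
have k2_ge0 x : (0 <= (k x ^+ 2)%:E)%E by rewrite lee_fin sqr_ge0.
have : (\int[P]_x (k x ^+ 2)%:E <= (e ^+ 2)%:E)%E.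
  rewrite -[leRHS]mule1 -(probability_setT P) -integral_cst //.
  apply: ae_ge0_le_integral => //.
  - by apply/measurable_EFinP; exact: measurable_funX.
  - by move=> x _; rewrite lee_fin sqr_ge0.
  - apply: filterS ke => x kx _; rewrite lee_fin -real_normK ?num_real //.
    by rewrite lerXn2r ?nnegrE // (le_trans (normr_ge0 _) kx).
move=> le_e; rewrite -lee_fin /Rintegral fineK // ge0_fin_numE ?integral_ge0 //.
exact: le_lt_trans le_e (ltry _).
Qed.

Lemma sqrtrD_le {R : rcfType} (x y : R) : 0 <= x -> 0 <= y ->
  Num.sqrt (x + y) <= Num.sqrt x + Num.sqrt y.
Proof.
move=> x0 y0; rewrite -(ger0_norm (addr_ge0 (sqrtr_ge0 x) (sqrtr_ge0 y))).
rewrite -sqrtr_sqr ler_sqrt ?sqr_ge0 // sqrrD !sqr_sqrtr // lerD2r lerDl.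
by rewrite mulrn_wge0 // mulr_ge0 ?sqrtr_ge0.
Qed.

(* Stated for [marginalX] because a bare [pushforward mu phi] only becomes a
   measure through a measurability proof that cannot be inferred. *)
Lemma Lnorm2_marginalX {R : realType} {d : nat}
    (rho : probability (d.-tuple R * R)%type R) (f : d.-tuple R -> R) :
  measurable_fun [set: d.-tuple R] f ->
  rho.-integrable [set: d.-tuple R * R] (fun z => (f z.1 ^+ 2)%:E) ->
  Lnorm (marginalX d rho) 2%:E (EFin \o f) =
  (Num.sqrt (Rintegral rho [set: d.-tuple R * R] (fun z => f z.1 ^+ 2)))%:E.
Proof.
move=> mf if2; rewrite unlock /=.
under eq_integral do rewrite powR_mulrn ?normr_ge0 // real_normK ?num_real //.
rewrite ge0_integral_pushforward //; first last.
- by move=> y _; rewrite lee_fin sqr_ge0.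
- by apply/measurable_EFinP; exact: measurable_funX.
have I0 : (\int[rho]_z (f z.1 ^+ 2)%:E =
    (Rintegral rho [set: _] (fun z => f z.1 ^+ 2))%:E)%E.
  by rewrite /Rintegral fineK // integrable_fin_num.
have I_ge0 : 0 <= Rintegral rho [set: _] (fun z => f z.1 ^+ 2).
  by apply: Rintegral_ge0 => z _; exact: sqr_ge0.
rewrite preimage_setT (_ : (\int[rho]_x _ = \int[rho]_z (f z.1 ^+ 2)%:E)%E) //.
by rewrite I0 poweR_EFin powR12_sqrt.
Qed.

Section regression.
Context {R : realType} {d : nat} {rho : probability (d.-tuple R * R)%type R}.
Context {eta : d.-tuple R -> R}.
Hypothesis eta_reg : regression_fun d rho eta.
Hypothesis Y_bounded : ae_bounded rho snd.

Lemma regression_integral_mul (h : d.-tuple R -> R) (c : R) :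
  measurable_fun [set: d.-tuple R] h -> (forall x, `|h x| <= c) ->
  (\int[rho]_z (h z.1 * z.2)%:E = \int[rho]_z (h z.1 * eta z.1)%:E)%E.
Proof.
move=> mh hc; have [meta [ieta etaE]] := eta_reg.
have ieta1 : rho.-integrable [set: _] ((EFin \o eta) \o fst).
  apply: (integrable_comp_of_pushforward measurable_fst (EFin \o eta)) => //.
  exact/measurable_EFinP.
apply: (integral_comp_mul_eq measurable_fst h c) => //.
  exact: ae_bounded_integrable.
move=> B mB; have mfB : measurable (fst @^-1` B : set (d.-tuple R * R)).
  by rewrite -setXT; exact: measurableX.
rewrite -setXT etaE // setXT integral_pushforward //; first exact/measurable_EFinP.
exact: integrableS measurableT mfB (@subsetT _ _) ieta1.
Qed.

Hypothesis eta_bounded : ae_bounded rho (fun z => eta z.1).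

Lemma sqr_loss_excess {F G : d.-tuple R -> R} {c : R} :
  measurable_fun [set: d.-tuple R] F -> measurable_fun [set: d.-tuple R] G ->
  (forall x, `|F x| <= c) -> (forall x, `|G x| <= c) ->
  Rintegral rho [set: _] (fun z => (F z.1 - z.2) ^+ 2) -
  Rintegral rho [set: _] (fun z => (G z.1 - z.2) ^+ 2) =
  Rintegral rho [set: _] (fun z => (F z.1 - eta z.1) ^+ 2) -
  Rintegral rho [set: _] (fun z => (G z.1 - eta z.1) ^+ 2).
Proof.
move=> mF mG Fc Gc.
have Fb : ae_bounded rho (fun z => F z.1).
  exact: ae_boundedW (measurableT_comp mF measurable_fst) (fun z => Fc z.1).
have Gb : ae_bounded rho (fun z => G z.1).
  exact: ae_boundedW (measurableT_comp mG measurable_fst) (fun z => Gc z.1).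
have Y_eta : Rintegral rho [set: _] (fun z => (F z.1 - G z.1) * z.2) =
    Rintegral rho [set: _] (fun z => (F z.1 - G z.1) * eta z.1).
  congr fine; apply: (regression_integral_mul (fun x => F x - G x) (c + c)).
    exact: measurable_funB.
  by move=> x; rewrite (le_trans (ler_normB _ _)) ?lerD.
have sqr_diff t : ae_bounded rho t -> Rintegral rho [set: _] (fun z => (F z.1 - t z) ^+ 2) -
    Rintegral rho [set: _] (fun z => (G z.1 - t z) ^+ 2) =
    Rintegral rho [set: _] (fun z => (F z.1 - G z.1) * (F z.1 + G z.1)) -
    2 * Rintegral rho [set: _] (fun z => (F z.1 - G z.1) * t z).
  move=> tb; rewrite -RintegralZl -?RintegralB //;
    do ?[by apply: ae_bounded_integrable; solve_ae_bounded].
  by apply: eq_Rintegral => z _; ring.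
by rewrite (sqr_diff snd) // (sqr_diff (eta \o fst)) // Y_eta.
Qed.

Lemma ae_bounded_realize a L (th : param R a) :
  ae_bounded rho (fun z => realize a L th z.1).
Proof.
exact: ae_boundedW (measurableT_comp (measurable_realize d a L th) measurable_fst)
                   (fun z => realize_bounded a L th z.1).
Qed.

Lemma reg_riskE a L (p lambda : R) (th : param R a) :
  reg_risk d rho a L p lambda th =
  (Rintegral rho [set: _] (fun z => (realize a L th z.1 - z.2) ^+ 2) +
   lambda / 2 * pnorm_p a L p th)%:E.
Proof.
have Fb := ae_bounded_realize a L th.
rewrite /reg_risk EFinD /Rintegral fineK // integrable_fin_num //.
by apply: ae_bounded_integrable; solve_ae_bounded.
Qed.

Lemma minimizer_sqr_error_le {a L} {p lambda Rb : R} {thl th : param R a} {e : R} :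
  0 <= p -> 0 <= lambda -> th \in paramset a L Rb ->
  {ae marginalX d rho, forall x : d.-tuple R, `|realize a L th x - eta x| <= e} ->
  (reg_risk d rho a L p lambda thl <= reg_risk d rho a L p lambda th)%E ->
  Rintegral rho [set: _] (fun z => (realize a L thl z.1 - eta z.1) ^+ 2) <=
  e ^+ 2 + lambda / 2 * (nparams a L)%:R * Rb `^ p.
Proof.
move=> p0 lambda0 thR close; rewrite !reg_riskE lee_fin => risk_le.
have [meta _] := eta_reg.
have excess := sqr_loss_excess (measurable_realize d a L thl)
  (measurable_realize d a L th) (fun x : d.-tuple R => realize_bounded a L thl x)
  (fun x : d.-tuple R => realize_bounded a L th x).
have V_le : Rintegral rho [set: _] (fun z => (realize a L th z.1 - eta z.1) ^+ 2) <= e ^+ 2.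
  apply: Rintegral_sqr_le (ae_pushforward rho fst measurable_fst _ close).
  exact: measurableT_comp (measurable_funB (measurable_realize d a L th) meta) measurable_fst.
have pen_le : lambda / 2 * pnorm_p a L p th <= lambda / 2 * (nparams a L)%:R * Rb `^ p.
  by rewrite -[leRHS]mulrA ler_wpM2l ?divr_ge0 // pnorm_p_le.
have pen_ge0 : 0 <= lambda / 2 * pnorm_p a L p thl.
  by rewrite mulr_ge0 ?divr_ge0 ?pnorm_p_ge0.
lra.
Qed.

End regression.

Lemma exists_ae_close {R : realType} {d : nat} {mu : {measure set d.-tuple R -> \bar R}}
    {eta : d.-tuple R -> R} {a : nat -> nat} {L : nat} {Rb eps e : R} :
  (ereal_inf [set Lnorm mu +oo (fun x => (f x - eta x)%:E) | f in NN d a L Rb]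
    <= eps%:E)%E -> eps < e ->
  exists2 th, th \in paramset a L Rb &
    {ae mu, forall x : d.-tuple R, `|realize a L th x - eta x| <= e}.
Proof.
move=> inf_le eps_e.
have [_ [_ [th thR ->] <-] close] := ereal_inf_lt (le_lt_trans inf_le (eps_e : (eps%:E < e%:E)%E)).
exists th; first by rewrite inE.
by apply: ae_le_Lnorm_infty; exact: ltW.
Qed.

Lemma ae_bounded_snd {R : realType} {d : nat} {rho : probability (d.-tuple R * R)%type R} :
  supported_on_cube_pm1 d rho -> ae_bounded rho snd.
Proof.
move=> supp; split; first exact: measurable_snd.
by exists 1; apply: filterS supp => z [_ [->|->]]; rewrite ?normrN normr1.
Qed.

Lemma ae_bounded_regression_fun {R : realType} {d : nat}
    {rho : probability (d.-tuple R * R)%type R} {eta : d.-tuple R -> R}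
    {a : nat -> nat} {L : nat} {Rb eps : R} :
  regression_fun d rho eta ->
  (ereal_inf [set Lnorm (marginalX d rho) +oo (fun x => (f x - eta x)%:E)
    | f in NN d a L Rb] <= eps%:E)%E ->
  ae_bounded rho (fun z => eta z.1).
Proof.
move=> [meta _] inf_le; split; first exact: measurableT_comp meta measurable_fst.
have [th _ close] : exists2 th, th \in paramset a L Rb &
    {ae marginalX d rho, forall x : d.-tuple R, `|realize a L th x - eta x| <= eps + 1}.
  by apply: exists_ae_close inf_le _; rewrite ltrDl.
exists (1 + (eps + 1)).
apply: filterS (ae_pushforward rho fst measurable_fst _ close) => z /= close_z.
rewrite (_ : eta z.1 = realize a L th z.1 - (realize a L th z.1 - eta z.1)); last by ring.
by rewrite (le_trans (ler_normB _ _)) // lerD // realize_bounded.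
Qed.

Lemma sqrtr_le_add_sqrt {R : rcfType} (x eps c : R) : 0 <= eps -> 0 <= c ->
  (forall e, eps < e -> x <= e ^+ 2 + c) -> Num.sqrt x <= eps + Num.sqrt c.
Proof.
move=> eps0 c0 x_le; rewrite -lerBlDr; apply/ler_addgt0Pr => del del0.
rewrite lerBlDr; have ed0 : 0 <= eps + del by rewrite addr_ge0 // ltW.
apply: (@le_trans _ _ (Num.sqrt ((eps + del) ^+ 2 + c))).
  by rewrite ler_sqrt ?x_le ?ltrDl // addr_ge0 ?sqr_ge0.
by rewrite (le_trans (sqrtrD_le _ _ (sqr_ge0 (eps + del)) c0)) // sqrtr_sqr ger0_norm.
Qed.

Theorem lemma9 (R : realType) (d : nat)
  (rho : probability (d.-tuple R * R)%type R) (eta : d.-tuple R -> R)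
  (p : R) (a : nat -> nat) (L : nat) (Rb eps lambda : R)
  (thl : param R a) :
  supported_on_cube_pm1 d rho ->
  regression_fun d rho eta ->
  0 < p ->
  (0 < L)%N -> a 0%N = d -> a L = 1%N ->
  0 < Rb ->
  0 <= eps ->
  (ereal_inf [set Lnorm (marginalX d rho) +oo%E (fun x => (f x - eta x)%:E)
               | f in NN d a L Rb] <= eps%:E)%E ->
  0 <= lambda ->
  thl \in paramset a L Rb ->
  (forall th, th \in paramset a L Rb ->
     (reg_risk d rho a L p lambda thl <= reg_risk d rho a L p lambda th)%E) ->
  (Lnorm (marginalX d rho) 2%:E (fun x => (realize a L thl x - eta x)%:E)
    <= (eps + Num.sqrt (lambda / 2 * (nparams a L)%:R * Rb `^ p))%:E)%E.
Proof.
move=> supp eta_reg p0 _ _ _ _ eps0 inf_le lambda0 _ thl_min.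
have Y_bounded := ae_bounded_snd supp.
have eta_bounded := ae_bounded_regression_fun eta_reg inf_le.
have Fb := ae_bounded_realize a L thl.
rewrite Lnorm2_marginalX; first last.
- by apply: ae_bounded_integrable; solve_ae_bounded.
- exact: measurable_funB (measurable_realize d a L thl) eta_reg.1.
rewrite lee_fin sqrtr_le_add_sqrt // ?mulr_ge0 ?divr_ge0 ?powR_ge0 // => e eps_e.
have [th thR close] := exists_ae_close inf_le eps_e.
by have := minimizer_sqr_error_le eta_reg Y_bounded eta_bounded (ltW p0) lambda0 thR
  close (thl_min th thR).
Qed.
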